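(* Let $G=(V,E)$ be a graph and let $\{A_\xi:\xi<\mu\}$ (for some ordinal $\mu$) be a family of subsets of $V$ with $\bigcup_{\xi<\mu}A_\xi=V$, such that for every $\xi<\mu$ the subgraph of $G$ spanned by $A_\xi$ has chromatic number at most $\omega$. Write $\bigcup A_{<\xi}=\bigcup\{A_\zeta:\zeta<\xi\}$. Suppose that for all $\xi<\mu$ and all $x\in A_\xi\setminus \bigcup A_{<\xi}$ we have $|N_G(x)\cap \bigcup A_{<\xi}|<\omega$. Then the chromatic number of $G$ is at most $\omega$.
   Context: For a graph $G=(V,E)$ and $v\in V$, $N_G(v)=\{w\in V:\{v,w\}\in E\}$. The chromatic number of $G$ is the least cardinal $\kappa$ such that $V$ is covered by $\kappa$ many independent sets. *)

From Stdlib Require Import List.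

(* A (simple) graph on a vertex type V is given by an adjacency relation E;
   N_G(v) = fun w => E v w. *)
Definition symmetric_rel {V : Type} (E : V -> V -> Prop) : Prop :=
  forall x y, E x y -> E y x.
Definition irreflexive_rel {V : Type} (E : V -> V -> Prop) : Prop :=
  forall x, ~ E x x.

Definition independent {V : Type} (E : V -> V -> Prop) (S : V -> Prop) : Prop :=
  forall x y, S x -> S y -> ~ E x y.

(* The subgraph of G spanned by A has chromatic number at most omega:
   A is covered by (at most) countably many independent sets (indexed by nat;
   empty sets are allowed, so fewer than omega many are also covered). *)
Definition chrom_le_omega_on {V : Type} (E : V -> V -> Prop) (A : V -> Prop) : Prop :=
  exists C : nat -> V -> Prop,
    (forall n x, C n x -> A x) /\
    (forall n, independent E (C n)) /\
    (forall x, A x -> exists n, C n x).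

Definition chrom_le_omega {V : Type} (E : V -> V -> Prop) : Prop :=
  chrom_le_omega_on E (fun _ => True).

Definition finite_set {V : Type} (S : V -> Prop) : Prop :=
  exists l : list V, forall x, S x -> In x l.

(* An ordinal mu is represented by a well-ordered index type (I, lt):
   a strict total order that is well-founded. *)
Definition well_order {I : Type} (lt : I -> I -> Prop) : Prop :=
  well_founded lt /\
  (forall a b c, lt a b -> lt b c -> lt a c) /\
  (forall a b, lt a b \/ a = b \/ lt b a).

Definition union_below {I V : Type} (lt : I -> I -> Prop) (A : I -> V -> Prop)
  (xi : I) : V -> Prop :=
  fun v => exists zeta, lt zeta xi /\ A zeta v.

(* Give each vertex its rank, the least ξ with v ∈ A_ξ, and colour it within
   A_rank.  Along the well-founded relation "w is a neighbour of v of smaller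
   rank" every vertex has only finitely many predecessors, so it carries a
   height h : V -> nat strictly decreasing along that relation.  The pair
   (colour, height) is then a proper colouring with countably many colours:
   neighbours of equal rank differ in colour, neighbours of distinct rank in
   height. *)

From Stdlib Require Import List Lia ClassicalEpsilon Cantor Inverse_Image Inclusion.

Lemma wf_minimal {I : Type} (lt : I -> I -> Prop) (P : I -> Prop) :
  well_founded lt -> (exists i, P i) -> exists m, P m /\ forall z, lt z m -> ~ P z.
Proof.
  intros Hwf [i Hi]; revert Hi.
  induction i as [i IH] using (well_founded_induction Hwf); intros Hi.
  destruct (classic (exists z, lt z i /\ P z)) as [[z [Hzi Hz]] | Hno].
  - exact (IH z Hzi Hz).
  - exists i; split; [exact Hi |].
    intros z Hzi Hz; apply Hno; eauto.
Qed.

Lemma in_le_list_max (l : list nat) (n : nat) : In n l -> n <= list_max l.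
Proof.
  intros Hn.
  exact (proj1 (Forall_forall _ l) (proj1 (list_max_le l (list_max l)) (le_n _)) n Hn).
Qed.

Section FinitelyBranchingHeight.

Variables (V : Type) (R : V -> V -> Prop).
Hypothesis Rwf : well_founded R.
Hypothesis Rfin : forall v, finite_set (fun w => R w v).

(* h v := 1 + max of h over the R-predecessors of v; the case split on
   [R w v] lets the recursion run over an arbitrary list covering them. *)
Lemma finitely_branching_height : exists h : V -> nat, forall v w, R w v -> h w < h v.
Proof.
  destruct (choice (fun v l => forall w, R w v -> In w l) Rfin) as [preds Hpreds].
  pose (step v (rec : forall w, R w v -> nat) :=
    S (list_max (map (fun w => match excluded_middle_informative (R w v) with
                               | left Hwv => rec w Hwv | right _ => 0 end) (preds v)))).
  pose (h := Fix Rwf (fun _ => nat) step).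
  exists h; intros v w Hwv.
  assert (Hunfold : h v = step v (fun w _ => h w)).
  { apply (Fix_eq Rwf (fun _ => nat) step).
    intros x f g Hfg; unfold step; do 2 f_equal.
    apply map_ext; intro y.
    destruct (excluded_middle_informative (R y x)); auto. }
  rewrite Hunfold; unfold step; apply le_n_S, in_le_list_max, in_map_iff.
  exists w; split; [| exact (Hpreds v w Hwv)].
  destruct (excluded_middle_informative (R w v)); [reflexivity | contradiction].
Qed.

End FinitelyBranchingHeight.

Section LayeredColouring.

Variables (V I : Type) (E : V -> V -> Prop) (lt : I -> I -> Prop).
Hypothesis Esym : symmetric_rel E.
Hypothesis lt_trichotomy : forall a b, lt a b \/ a = b \/ lt b a.

Lemma chrom_le_omega_of_colouring (f : V -> nat) :
  (forall x y, E x y -> f x <> f y) -> chrom_le_omega E.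
Proof.
  intros Hf.
  exists (fun n x => f x = n); split; [| split].
  - trivial.
  - intros n x y <- Hy Exy; exact (Hf x y Exy (eq_sym Hy)).
  - intros x _; eauto.
Qed.

Lemma chrom_le_omega_of_layers (rank : V -> I) (c h : V -> nat) :
  (forall x y, E x y -> rank x = rank y -> c x <> c y) ->
  (forall x y, E x y -> lt (rank y) (rank x) -> h y < h x) ->
  chrom_le_omega E.
Proof.
  intros Hc Hh.
  apply (chrom_le_omega_of_colouring (fun v => to_nat (c v, h v))).
  intros x y Exy Hxy.
  assert (Hpair : (c x, h x) = (c y, h y)).
  { rewrite <- (cancel_of_to (c x, h x)), <- (cancel_of_to (c y, h y)), Hxy.
    reflexivity. }
  injection Hpair as Hcxy Hhxy.
  destruct (lt_trichotomy (rank x) (rank y)) as [Hlt | [Heq | Hlt]].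
  - pose proof (Hh y x (Esym _ _ Exy) Hlt); lia.
  - exact (Hc x y Exy Heq Hcxy).
  - pose proof (Hh x y Exy Hlt); lia.
Qed.

End LayeredColouring.

Theorem mainTheorem1 (V : Type) (E : V -> V -> Prop)
  (Esym : symmetric_rel E) (Eirr : irreflexive_rel E)
  (I : Type) (lt : I -> I -> Prop) (Hwo : well_order lt)
  (A : I -> V -> Prop)
  (Hcover : forall v, exists xi, A xi v)
  (Hcol : forall xi, chrom_le_omega_on E (A xi))
  (Hfin : forall xi x, A xi x -> ~ union_below lt A xi x ->
            finite_set (fun y => E x y /\ union_below lt A xi y)) :
  chrom_le_omega E.
Proof.
  destruct Hwo as [Hwf [_ Htri]].
  destruct (choice (fun v m => A m v /\ forall z, lt z m -> ~ A z v)
              (fun v => wf_minimal lt (fun xi => A xi v) Hwf (Hcover v)))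
    as [rank Hrank].
  destruct (choice _ Hcol) as [C HC].
  destruct (choice (fun v n => C (rank v) n v)
              (fun v => proj2 (proj2 (HC (rank v))) v (proj1 (Hrank v))))
    as [c Hc].
  destruct (finitely_branching_height V (fun w v => E v w /\ lt (rank w) (rank v)))
    as [h Hh].
  - apply (wf_incl _ _ (fun w v => lt (rank w) (rank v))); [intros w v []; trivial |].
    exact (wf_inverse_image V I lt rank Hwf).
  - intro v.
    assert (Hfresh : ~ union_below lt A (rank v) v).
    { intros [z [Hz Hzv]]; exact (proj2 (Hrank v) z Hz Hzv). }
    destruct (Hfin (rank v) v (proj1 (Hrank v)) Hfresh) as [l Hl].
    exists l; intros w [Evw Hw].
    apply Hl; split; [exact Evw |].
    exists (rank w); split; [exact Hw | exact (proj1 (Hrank w))].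
  - apply (chrom_le_omega_of_layers V I E lt Esym Htri rank c h).
    + intros x y Exy Hxy Hcxy.
      apply (proj1 (proj2 (HC (rank x))) (c x) x y (Hc x)); [| exact Exy].
      rewrite Hcxy, Hxy; apply Hc.
    + intros x y Exy Hlt; apply Hh; split; assumption.
Qed.
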